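(* Let $\mathcal I$ be partial. For any policy $\pi$ with shielded policy $\pi'=\mathcal G(\pi)$ and any $h\ge0$, $$\Pr(s_\triangleright\in\xi^h\mid\pi,\mathcal M)\le\Pr(s_\triangleright\in\xi^h\mid\pi',\mathcal M)+\Pr(\xi^h\cap\mathcal I\neq\varnothing\mid\pi,\mathcal M),$$ where $s_\triangleright\in\xi^h$ means $s_t=s_\triangleright$ for some $t\le h$, and $\xi^h\cap\mathcal I\neq\varnothing$ means $(s_t,a_t)\in\mathcal I$ for some $t\le h$.
   Context: $\mathcal M=(\mathcal S,\mathcal A,P,r,\gamma)$ is a discounted MDP with discrete state and action spaces and initial distribution $d_0$; $\mathcal S$ contains two distinguished unsafe states $s_\triangleright,s_\circ$ and $\mathcal S_{\mathrm{safe}}=\mathcal S\setminus\{s_\triangleright,s_\circ\}$. $\Pr(\cdot\mid\pi,\mathcal M)$ is the law of trajectories $(s_0,a_0,s_1,\dots)$ of the stationary policy $\pi$ in $\mathcal M$ with $s_0\sim d_0$, and $\xi^h=(s_0,a_0,\dots,s_h,a_h)$. An intervention rule $\mathcal G=(\bar Q,\mu,\eta)$ (backup policy $\mu$, $\eta\in[0,1]$, $\bar Q:\mathcal S_{\mathrm{safe}}\times\mathcal A\to[0,1]$) has intervention set $\mathcal I=\{(s,a)\in\mathcal S_{\mathrm{safe}}\times\mathcal A:\bar Q(s,a)-\mathbb E_{a'\sim\mu(\cdot|s)}\bar Q(s,a')>\eta\}$ and shielded policy $\mathcal G(\pi)(a|s)=\pi(a|s)\mathbb 1\{(s,a)\notin\mathcal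 I\}+w(s)\mu(a|s)$, $w(s)=\sum_{\tilde a:(s,\tilde a)\in\mathcal I}\pi(\tilde a|s)$. A set $\mathcal X\subseteq\mathcal S_{\mathrm{safe}}\times\mathcal A$ is partial if for every $(s,a)\in\mathcal X$ there is $a'$ with $(s,a')\notin\mathcal X$. *)

From HB Require Import structures.
From mathcomp Require Import all_boot all_order all_algebra.
From mathcomp Require Import all_classical all_reals.
From mathcomp Require Import ereal esum.
Set Implicit Arguments. Unset Strict Implicit. Unset Printing Implicit Defensive.
Import Order.TTheory GRing.Theory Num.Theory.
Local Open Scope classical_set_scope.
Local Open Scope ring_scope.

Section MDP.
Context {R : realType} {S A : countType}.

Definition is_distr (T : countType) (p : T -> R) : Prop :=
  (forall x, 0 <= p x) /\ (\esum_(x in [set: T]) (p x)%:E = 1%E).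

(* a stationary (stochastic) policy pi(a|s) = pi s a *)
Definition is_policy (pi : S -> A -> R) : Prop := forall s, is_distr (pi s).

(* transition kernel P(s'|s,a) = P s a s' *)
Definition is_kernel (P : S -> A -> S -> R) : Prop :=
  forall s a, is_distr (P s a).

(* S_safe = S \ {s_tri, s_circ} *)
Definition safe (st so : S) (s : S) : Prop := s <> st /\ s <> so.

Definition expQ (Qbar : S -> A -> R) (mu : S -> A -> R) (s : S) : \bar R :=
  \esum_(a' in [set: A]) (mu s a' * Qbar s a')%:E.

Definition interv (st so : S) (Qbar : S -> A -> R) (mu : S -> A -> R) (eta : R)
  (s : S) (a : A) : Prop :=
  safe st so s /\ ((Qbar s a)%:E - expQ Qbar mu s > eta%:E)%E.

Definition partial_set (X : S -> A -> Prop) : Prop :=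
  forall s a, X s a -> exists a', ~ X s a'.

Definition wmass (I : S -> A -> Prop) (pi : S -> A -> R) (s : S) : R :=
  fine (\esum_(a in [set a | I s a]) (pi s a)%:E).

Definition shield (I : S -> A -> Prop) (mu pi : S -> A -> R) : S -> A -> R :=
  fun s a => pi s a * (if `[< I s a >] then 0 else 1) + wmass I pi s * mu s a.

(* probability weight of the prefix xi^h = [:: (s_0,a_0); ...; (s_h,a_h)]
   under the trajectory law of pi in M with s_0 ~ d0 *)
Fixpoint wtail (P : S -> A -> S -> R) (pi : S -> A -> R) (x : S * A)
  (xs : seq (S * A)) : R :=
  match xs with
  | [::] => 1
  | y :: ys => P x.1 x.2 y.1 * pi y.1 y.2 * wtail P pi y ys
  end.

Definition pweight (d0 : S -> R) (P : S -> A -> S -> R) (pi : S -> A -> R)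
  (xi : seq (S * A)) : R :=
  match xi with
  | [::] => 0
  | x :: xs => d0 x.1 * pi x.1 x.2 * wtail P pi x xs
  end.

Definition prefix_prob (d0 : S -> R) (P : S -> A -> S -> R) (pi : S -> A -> R)
  (h : nat) (E : seq (S * A) -> Prop) : \bar R :=
  \esum_(xi in [set xi : seq (S * A) | size xi = h.+1 /\ E xi])
     (pweight d0 P pi xi)%:E.

Definition visits (s : S) (xi : seq (S * A)) : Prop :=
  exists2 x, x \in xi & x.1 = s.

Definition meets_set (I : S -> A -> Prop) (xi : seq (S * A)) : Prop :=
  exists2 x, x \in xi & I x.1 x.2.

End MDP.

(* Split the prefixes xi^h that visit s_tri into those that meet I and those
   that avoid it.  The first part is bounded by Pr(xi^h meets I | pi).  On the
   second part every pair (s_t, a_t) lies outside I, where the shield can only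
   add mass: pi'(a|s) = pi(a|s) + w(s) mu(a|s) >= pi(a|s).  Since the weight
   of a prefix is a product of nonnegative factors, it is monotone in the
   policy along the pairs of the prefix, so each such prefix is at least as
   likely under pi' as under pi. *)
From HB Require Import structures.
From mathcomp Require Import all_boot all_order all_algebra.
From mathcomp Require Import all_classical all_reals.
From mathcomp Require Import ereal esum.
Import Order.TTheory GRing.Theory Num.Theory.
Local Open Scope classical_set_scope.
Local Open Scope ring_scope.

Lemma esum_subset_le (R : realType) (T : choiceType) (X Y : set T)
    (a : T -> \bar R) :
  X `<=` Y -> (forall i, Y i -> (0 <= a i)%E) ->
  (\esum_(i in X) a i <= \esum_(i in Y) a i)%E.
Proof.
move=> XY a0; rewrite (esum_mkcond X) (esum_mkcond Y); apply: le_esum => i _.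
case: ifPn => [/set_mem/XY Yi|_]; first by rewrite ifT //; exact: mem_set.
by case: ifPn => // /set_mem /a0.
Qed.

Section PrefixWeights.
Context {R : realType} {S A : countType}.
Variables (P : S -> A -> S -> R) (d0 : S -> R).
Hypothesis P_ge0 : forall s a s', 0 <= P s a s'.
Hypothesis d0_ge0 : forall s, 0 <= d0 s.

Lemma wtail_ge0 (pi : S -> A -> R) : (forall s a, 0 <= pi s a) ->
  forall xs x, 0 <= wtail P pi x xs.
Proof. by move=> pi_ge0; elim=> [|y ys IH] x //=; rewrite !mulr_ge0. Qed.

Lemma pweight_ge0 (pi : S -> A -> R) : (forall s a, 0 <= pi s a) ->
  forall xi, 0 <= pweight d0 P pi xi.
Proof. by move=> pi_ge0 [|x xs] //=; rewrite !mulr_ge0 // wtail_ge0. Qed.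

Variables (pi pi' : S -> A -> R).
Hypothesis pi_ge0 : forall s a, 0 <= pi s a.

Lemma wtail_le xs x : (forall y, y \in xs -> pi y.1 y.2 <= pi' y.1 y.2) ->
  wtail P pi x xs <= wtail P pi' x xs.
Proof.
elim: xs x => [|y ys IH] x le_pi //=.
have le_y : pi y.1 y.2 <= pi' y.1 y.2 by apply: le_pi; rewrite mem_head.
apply: ler_pM; rewrite ?mulr_ge0 ?wtail_ge0 //.
- exact: ler_pM.
- by apply: IH => z zys; apply: le_pi; rewrite in_cons zys orbT.
Qed.

Lemma pweight_le xi : (forall y, y \in xi -> pi y.1 y.2 <= pi' y.1 y.2) ->
  pweight d0 P pi xi <= pweight d0 P pi' xi.
Proof.
case: xi => [|x xs] le_pi //=.
have le_x : pi x.1 x.2 <= pi' x.1 x.2 by apply: le_pi; rewrite mem_head.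
apply: ler_pM; rewrite ?mulr_ge0 ?wtail_ge0 //; first exact: ler_pM.
by apply: wtail_le => y yxs; apply: le_pi; rewrite in_cons yxs orbT.
Qed.

End PrefixWeights.

Section Shield.
Context {R : realType} {S A : countType}.
Variables (I : S -> A -> Prop) (mu pi : S -> A -> R).
Hypothesis mu_ge0 : forall s a, 0 <= mu s a.
Hypothesis pi_ge0 : forall s a, 0 <= pi s a.

Lemma wmass_ge0 s : 0 <= wmass I pi s.
Proof. by apply/fine_ge0/esum_ge0 => a _; rewrite lee_fin. Qed.

Lemma shield_ge0 s a : 0 <= shield I mu pi s a.
Proof.
by rewrite /shield addr_ge0 ?mulr_ge0 ?wmass_ge0 //; case: asboolP.
Qed.

Lemma shield_ge_off s a : ~ I s a -> pi s a <= shield I mu pi s a.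
Proof.
by move=> nIsa; rewrite /shield asboolF // mulr1 lerDl mulr_ge0 ?wmass_ge0.
Qed.

End Shield.

Lemma prefix_prob_le_off (R : realType) (S A : countType)
    (P : S -> A -> S -> R) (d0 : S -> R) (I : S -> A -> Prop)
    (pi pi' : S -> A -> R) (h : nat) (E : seq (S * A) -> Prop) :
  (forall s a s', 0 <= P s a s') -> (forall s, 0 <= d0 s) ->
  (forall s a, 0 <= pi s a) -> (forall s a, 0 <= pi' s a) ->
  (forall s a, ~ I s a -> pi s a <= pi' s a) ->
  (prefix_prob d0 P pi h E <=
   prefix_prob d0 P pi' h E + prefix_prob d0 P pi h (meets_set I))%E.
Proof.
move=> P_ge0 d0_ge0 pi_ge0 pi'_ge0 le_off.
have w_ge0 (p : S -> A -> R) xi : (forall s a, 0 <= p s a) ->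
    (0 <= (pweight d0 P p xi)%:E)%E.
  by move=> p_ge0; rewrite lee_fin pweight_ge0.
rewrite /prefix_prob (esumID (meets_set I)); last by move=> xi _; exact: w_ge0.
rewrite addeC; apply: leeD.
- apply: (@le_trans _ _ (\esum_(xi in [set xi : seq (S * A) |
      size xi = h.+1 /\ E xi] `&` ~` meets_set I) (pweight d0 P pi' xi)%:E)).
    apply: le_esum => xi [_ avoid]; rewrite lee_fin; apply: pweight_le => //.
    by move=> y yxi; apply: le_off => Iy; apply: avoid; exists y.
  apply: esum_subset_le; first by move=> xi [].
  by move=> xi _; exact: w_ge0.
- apply: esum_subset_le; last by move=> xi _; exact: w_ge0.
  by move=> xi [[size_xi _] meets].
Qed.

Theorem mainTheorem17 (R : realType) (S A : countType)
  (P : S -> A -> S -> R) (d0 : S -> R)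
  (st so : S) (Qbar : S -> A -> R) (mu : S -> A -> R) (eta : R)
  (pi : S -> A -> R) (h : nat) :
  is_kernel P -> is_distr d0 -> st <> so ->
  is_policy mu -> 0 <= eta <= 1 ->
  (forall s a, safe st so s -> 0 <= Qbar s a <= 1) ->
  partial_set (interv st so Qbar mu eta) ->
  is_policy pi ->
  (prefix_prob d0 P pi h (visits st) <=
   prefix_prob d0 P (shield (interv st so Qbar mu eta) mu pi) h (visits st)
   + prefix_prob d0 P pi h (meets_set (interv st so Qbar mu eta)))%E.
Proof.
move=> P_kernel d0_distr _ mu_policy _ _ _ pi_policy.
have P_ge0 s a s' : 0 <= P s a s' by case: (P_kernel s a).
have d0_ge0 s : 0 <= d0 s by case: d0_distr.
have mu_ge0 s a : 0 <= mu s a by case: (mu_policy s).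
have pi_ge0 s a : 0 <= pi s a by case: (pi_policy s).
apply: prefix_prob_le_off => //.
- by move=> s a; exact: shield_ge0.
- by move=> s a; exact: shield_ge_off.
Qed.
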